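(* Let $\mathcal{P}=\{p_1>p_2>\cdots>p_k\}$ be a finite nonempty set of positive integers. Then the pair $(\mathcal{P},\mathcal{P})$ is bigraphic, and there is a bipartite graph realizing $(\mathcal{P},\mathcal{P})$ in which each stable set has exactly $p_1$ vertices; moreover, such a graph can be chosen to be a mirror bipartite graph.
   Context: For finite sets of integers $\mathcal{P}=\{p_1>\cdots>p_{k_1}\}$ and $\mathcal{Q}=\{q_1>\cdots>q_{k_2}\}$, a bipartite graph $G$ with stable sets $V_1,V_2$ realizes the pair $(\mathcal{P},\mathcal{Q})$ if the set of degrees of vertices in $V_1$ is exactly $\mathcal{P}$ (each $p_i$ occurring at least once, and no other value occurring) and the set of degrees of vertices in $V_2$ is exactly $\mathcal{Q}$; the pair is bigraphic if such $G$ exists. A bipartite graph $G=(V_1\cup V_2,E)$ is mirror if there is a bijection $\varphi:V_1\to V_2$ with $u\varphi(v)\in E \iff \varphi(u)v\in E$ for all $u,v\in V_1$. *)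

From mathcomp Require Import all_boot.
Set Implicit Arguments. Unset Strict Implicit. Unset Printing Implicit Defensive.

(* A bipartite graph with stable sets V1 = 'I_n1 and V2 = 'I_n2 is given by
   its edge relation E : 'I_n1 -> 'I_n2 -> bool (E u v  <->  uv is an edge). *)

Definition deg1 n1 n2 (E : 'I_n1 -> 'I_n2 -> bool) (u : 'I_n1) : nat :=
  #|[set v : 'I_n2 | E u v]|.
Definition deg2 n1 n2 (E : 'I_n1 -> 'I_n2 -> bool) (v : 'I_n2) : nat :=
  #|[set u : 'I_n1 | E u v]|.

Definition realizes n1 n2 (E : 'I_n1 -> 'I_n2 -> bool) (P Q : seq nat) : Prop :=
  (forall d, d \in P <-> exists u, deg1 E u = d) /\
  (forall d, d \in Q <-> exists v, deg2 E v = d).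

Definition bigraphic (P Q : seq nat) : Prop :=
  exists n1 n2 (E : 'I_n1 -> 'I_n2 -> bool), realizes E P Q.

Definition mirror n1 n2 (E : 'I_n1 -> 'I_n2 -> bool) : Prop :=
  exists phi : 'I_n1 -> 'I_n2, bijective phi /\
    forall u v : 'I_n1, E u (phi v) = E v (phi u).

From mathcomp Require Import all_boot.
From mathcomp Require Import zify.

Set Implicit Arguments.
Unset Strict Implicit.
Unset Printing Implicit Defensive.

(* Let [below q] be the number of elements of P smaller than q, and join
   u and v (0 <= u, v < max P) iff [below (u+1) + below (v+1) < |P|].  The
   relation is symmetric, so the identity is a mirror bijection.  For q in P,
   [below (v+1) <= below q] iff v < q, so the neighbourhood of u is the initial
   segment [0, q) where q is the element of P with
   [below q = |P| - 1 - below (u+1)].  As u ranges over the vertices,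
   [below (u+1)] takes every value in [0, |P|), so q takes every value in P. *)

Lemma mem_bigmax_seq (s : seq nat) : s != [::] -> \max_(p <- s) p \in s.
Proof.
elim: s => [//|x [|y s] IH] _; rewrite big_cons.
  by rewrite big_nil maxn0 mem_head.
rewrite /maxn; case: ifP => _; last exact: mem_head.
by rewrite inE IH ?orbT.
Qed.

Lemma card_ord_lt m q : q <= m -> #|[set v : 'I_m | v < q]| = q.
Proof.
move=> le_qm.
have -> : [set v : 'I_m | v < q] = [set widen_ord le_qm i | i in 'I_q].
  apply/setP => v; rewrite inE; apply/idP/imsetP => [lt_vq|[i _ ->]].
    by exists (Ordinal lt_vq) => //; apply: val_inj.
  exact: (ltn_ord i).
by rewrite card_imset ?card_ord // => i j /(congr1 val) /= /val_inj.
Qed.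

Section Below.
Variable s : seq nat.

Definition below (q : nat) : nat := count (fun p => p < q) s.

Lemma below_mono : {homo below : x y / x <= y}.
Proof.
by move=> x y le_xy; apply: sub_count => p /= lt_px; exact: leq_trans lt_px le_xy.
Qed.

Lemma belowS q : below q.+1 = below q + count_mem q s.
Proof. by rewrite /below; elim: s => //= p t ->; rewrite ltnS leq_eqVlt; lia. Qed.

Lemma below_ltS q : q \in s -> below q < below q.+1.
Proof.
move=> qs; rewrite belowS -[X in X < _]addn0 ltn_add2l -has_count.
by apply/hasP; exists q => /=.
Qed.

Lemma leq_below q x : q \in s -> (below x <= below q) = (x <= q).
Proof.
move=> qs; case: (leqP x q) => [|lt_qx]; first exact: below_mono.
by apply/negbTE; rewrite -ltnNge; apply: leq_trans (below_ltS qs) (below_mono lt_qx).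
Qed.

Lemma below_inj : {in s &, injective below}.
Proof.
move=> a b as_ bs eq_ab; apply/eqP; rewrite eqn_leq.
by rewrite -(leq_below _ bs) -(leq_below _ as_) eq_ab !leqnn.
Qed.

Lemma below_lt_size q : q \in s -> below q < size s.
Proof.
move=> qs; rewrite -(count_predC (fun p => p < q)) -[X in X < _]addn0 ltn_add2l.
by rewrite -has_count; apply/hasP; exists q; rewrite //= ltnn.
Qed.

Lemma below_onto t : uniq s -> t < size s -> exists2 q, q \in s & below q = t.
Proof.
move=> s_uniq lt_ts.
have uniq_im : uniq (map below s) by rewrite map_inj_in_uniq //; exact: below_inj.
have sub_im : {subset map below s <= iota 0 (size s)}.
  by move=> _ /mapP [q qs ->]; rewrite mem_iota below_lt_size.
have le_size : size (iota 0 (size s)) <= size (map below s).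
  by rewrite size_map size_iota.
have [_ im_iota] := uniq_min_size uniq_im sub_im le_size.
have : t \in iota 0 (size s) by rewrite mem_iota.
by rewrite -im_iota => /mapP [q qs ->]; exists q.
Qed.

End Below.

Definition chain_graph (s : seq nat) (m : nat) : 'I_m -> 'I_m -> bool :=
  fun u v => below s u.+1 + below s v.+1 < size s.
Arguments chain_graph : clear implicits.

Lemma chain_graph_sym s m (u v : 'I_m) : chain_graph s m u v = chain_graph s m v u.
Proof. by rewrite /chain_graph addnC. Qed.

Section ChainGraphDegrees.
Variables (s : seq nat) (m : nat).
Hypotheses (s_uniq : uniq s) (s_pos : all (fun p => 0 < p) s)
  (m_in : m \in s) (le_m : forall q, q \in s -> q <= m).

Lemma chain_graph_nbhd (u : 'I_m) q : q \in s ->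
  below s u.+1 + below s q = (size s).-1 ->
  [set v | chain_graph s m u v] = [set v : 'I_m | v < q].
Proof.
move=> qs below_uq; apply/setP => v; rewrite !inE /chain_graph -(leq_below _ qs).
have := below_lt_size qs; lia.
Qed.

Lemma deg1_chain_graph_mem (u : 'I_m) : deg1 (chain_graph s m) u \in s.
Proof.
have lt_us : below s u.+1 < size s.
  exact: leq_ltn_trans (below_mono s (ltn_ord u)) (below_lt_size m_in).
have lt_t : (size s).-1 - below s u.+1 < size s by lia.
have [q qs below_q] := below_onto s_uniq lt_t.
by rewrite /deg1 (chain_graph_nbhd qs) ?card_ord_lt ?le_m //; lia.
Qed.

Lemma deg1_chain_graph_onto d :
  d \in s -> exists u : 'I_m, deg1 (chain_graph s m) u = d.
Proof.
move=> ds; have lt_ds := below_lt_size ds.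
have lt_t : (size s).-1 - below s d < size s by lia.
have [q qs below_q] := below_onto s_uniq lt_t.
have q_pos : 0 < q by move/allP: s_pos => /(_ q qs).
have lt_qm : q.-1 < m by have := le_m qs; lia.
exists (Ordinal lt_qm); rewrite /deg1 (chain_graph_nbhd ds) ?card_ord_lt ?le_m //=.
by rewrite prednK //; lia.
Qed.

End ChainGraphDegrees.

Lemma realizes_sym n (E : 'I_n -> 'I_n -> bool) (P : seq nat) :
  (forall u v, E u v = E v u) ->
  (forall d, d \in P <-> exists u, deg1 E u = d) -> realizes E P P.
Proof.
move=> E_sym degP; have deg21 v : deg2 E v = deg1 E v.
  by apply: eq_card => u; rewrite !inE E_sym.
by split=> // d; rewrite degP; split=> -[u <-]; exists u; rewrite deg21.
Qed.

Lemma mirror_sym n (E : 'I_n -> 'I_n -> bool) :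
  (forall u v, E u v = E v u) -> mirror E.
Proof. by move=> E_sym; exists id; split; [exists id | move=> u v; rewrite E_sym]. Qed.

Theorem theorem5 (P : seq nat) :
  P != [::] -> uniq P -> all (fun p => 0 < p) P ->
  bigraphic P P /\
  exists E : 'I_(\max_(p <- P) p) -> 'I_(\max_(p <- P) p) -> bool,
    realizes E P P /\ mirror E.
Proof.
move=> P_ne0 P_uniq P_pos; set m := \max_(p <- P) p.
have m_in : m \in P by exact: mem_bigmax_seq.
have le_m q : q \in P -> q <= m by move=> qP; exact: leq_bigmax_seq.
have realP : realizes (chain_graph P m) P P.
  apply: realizes_sym => [|d]; first exact: chain_graph_sym.
  split; first exact: deg1_chain_graph_onto.
  by case=> u <-; exact: deg1_chain_graph_mem.
split; first by exists m, m, (chain_graph P m).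
by exists (chain_graph P m); split; last exact/mirror_sym/chain_graph_sym.
Qed.
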